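(* Let $I$ be a set of players, for each $i\in I$ let $G_i$ be a compact convex subset of a Hausdorff locally convex topological vector space, and let $G=(G_i,P_i,Q_i)_{i\in I}$ be a general qualitative game satisfying property $T$, where $P_i,Q_i:\prod_{j\in I}G_j\to 2^{G_i}$ satisfy for each $i\in I$: (i) $y_i\in Q_i(y_i,x_{-i})$ for each $y_i\in G_i$ and each $x_{-i}\in G_{-i}$; (ii) $Q_i$ has convex closed values; (iii) $x_i\notin P_i(x)$ for each $x\in\prod_{j\in I}G_j$; (iv) $P_i$ is upper semicontinuous with closed convex values in $G_i$. Then: (a) if $G\to^* H$ and there exist $i\in I$ and $x_i,y_i\in G_i$ with $y_i\succ_H x_i$, then there exists $x_i^*\in H_i$ such that $x_i^*\succ_H x_i$ and $z_i\not\succ_H x_i^*$ for all $z_i\in G_i$; (b) if $M$ is a nonempty maximal $(\to^* )$-reduction of $G$, then $M$ is the unique maximal $(\to^* )$-reduction of $G$.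
   Context: $I$ is a nonempty set; $X=\prod_{j\in I}G_j$, $G_{-i}=\prod_{j\ne i}G_j$, $x=(x_i,x_{-i})$. A general qualitative game is $G=(G_i,P_i,Q_i)_{i\in I}$ with correspondences $P_i,Q_i:X\to 2^{G_i}$. It satisfies property $T$ if for each $i$ and each $x\in X$: $P_i(x)\subseteq Q_i(x)$, and $y_i\in P_i(x)$ implies $Q_i(y_i,x_{-i})\subseteq P_i(x)$. A pairing of $G$ is a family $H=(H_i)_{i\in I}$ with $H_i\subseteq G_i$ (the $P_i$ restricted to $\prod_jH_j$); $H_{-i}=\prod_{j\ne i}H_j$; $H$ is nonempty if every $H_i\neq\emptyset$. For $x_i,y_i\in G_i$: $y_i\succ_H x_i$ iff $H_{-i}\neq\emptyset$ and $y_i\in P_i(x_i,x_{-i})$ for all $x_{-i}\in H_{-i}$. For pairings $R,S$ with $S_i\subseteq R_i$ for all $i$: $R\to S$ means for every $i$ and $x_i\in R_i\setminus S_i$, $\bigcap_{x_{-i}\in R_{-i}}P_i(x_i,x_{-i})\ne\emptyset$; it is fast if moreover for every $i$ and $x_i\in R_i$, $\bigcap_{x_{-i}\in R_{-i}}P_i(x_i,x_{-i})\neq\emptyset$ implies $x_i\notin S_i$. $G\to^*H$ means there is a finite or countably infinite sequence of pairings $R^0=G,R^1,\dots$ with $R^t\to R^{t+1}$ fast for each $t$ and $H_i=\bigcap_tR^t_i$ for each $i$. $H$ is a maximal $(\to^* )$-reduction of $G$ if $G\to^*H$ and, for pairings $H'$ with $H'_i\subseteq H_i$, $H\to H'$ holds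 only for $H'=H$. *)

From HB Require Import structures.
From mathcomp Require Import all_boot all_order all_algebra.
From mathcomp Require Import all_classical all_reals all_analysis.
Unset Printing Implicit Defensive.
Import Order.TTheory GRing.Theory Num.Theory.
Local Open Scope classical_set_scope.

Section QualGame.
Variables (I : Type) (T : I -> Type).

(* profile update: (y_i, x_{-i}) *)
Definition upd (x : forall j, T j) (i : I) (y : T i) : forall j, T j :=
  fun j => match pselect (i = j) with
           | left e => eq_rect i T y j e
           | right _ => x j
           end.

Definition profiles (G : forall i, set (T i)) : set (forall j, T j) :=
  [set x | forall j, G j (x j)].

(* x_{-i} in H_{-i}  (the i-th coordinate of x is irrelevant) *)
Definition in_minus (H : forall i, set (T i)) (i : I) (x : forall j, T j) :=
  forall j, j <> i -> H j (x j).

Variables (G : forall i, set (T i))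
          (P : forall i, (forall j, T j) -> set (T i)).

Definition propertyT (Q : forall i, (forall j, T j) -> set (T i)) :=
  forall (i : I) (x : forall j, T j), profiles G x ->
    P i x `<=` Q i x /\
    (forall y, P i x y -> Q i (upd x i y) `<=` P i x).

Definition pairing (H : forall i, set (T i)) := forall i, H i `<=` G i.

Definition nonempty_pairing (H : forall i, set (T i)) := forall i, H i !=set0.

Definition succH (H : forall i, set (T i)) (i : I) (yi xi : T i) :=
  (exists x, in_minus H i x) /\
  (forall x, in_minus H i x -> P i (upd x i xi) yi).

Definition cap_nonempty (R : forall i, set (T i)) (i : I) (xi : T i) :=
  exists2 y, G i y & forall x, in_minus R i x -> P i (upd x i xi) y.

Definition arrow (R S : forall i, set (T i)) :=
  (forall i, S i `<=` R i) /\
  (forall i xi, R i xi -> ~ S i xi -> cap_nonempty R i xi).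

Definition fast_arrow (R S : forall i, set (T i)) :=
  arrow R S /\ (forall i xi, R i xi -> cap_nonempty R i xi -> ~ S i xi).

(* index t is in the range of a sequence of length len (None = infinite,
   Some n = R^0, ..., R^n) *)
Definition in_range (len : option nat) (t : nat) :=
  match len with None => True | Some n => is_true (t <= n)%N end.

Definition reduces_star (H : forall i, set (T i)) :=
  exists (R : nat -> forall i, set (T i)) (len : option nat),
    (forall i, R 0%N i = G i) /\
    (forall t, in_range len t.+1 -> pairing (R t) /\ fast_arrow (R t) (R t.+1)) /\
    (forall i, H i = [set y | forall t, in_range len t -> R t i y]).

Definition maximal_reduction (H : forall i, set (T i)) :=
  reduces_star H /\
  (forall H', pairing H' -> (forall i, H' i `<=` H i) -> arrow H H' ->
     forall i, H' i = H i).

End QualGame.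
Arguments upd {I T}.
Arguments profiles {I T}.
Arguments in_minus {I T}.
Arguments propertyT {I T}.
Arguments pairing {I T}.
Arguments nonempty_pairing {I T}.
Arguments succH {I T}.
Arguments cap_nonempty {I T}.
Arguments arrow {I T}.
Arguments fast_arrow {I T}.
Arguments reduces_star {I T}.
Arguments maximal_reduction {I T}.

Definition prod_nbhs {I : Type} {E : I -> topologicalType}
  (x : forall j, E j) (U : set (forall j, E j)) :=
  exists (F : set I) (V : forall j, set (E j)), finite_set F /\
    (forall j, F j -> open (V j) /\ V j (x j)) /\
    (forall y, (forall j, F j -> V j (y j)) -> U y).

(* upper semicontinuity of P_i on X = prod_j G_j (X with the product of the
   subspace topologies); since values lie in G_i, relatively open W' = W \cap G_i
   may be replaced by ambient open W. *)
Definition usc {I : Type} {E : I -> topologicalType} (G : forall j, set (E j))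
  (i : I) (F : (forall j, E j) -> set (E i)) :=
  forall x, profiles G x -> forall W : set (E i), open W -> F x `<=` W ->
    exists U, prod_nbhs x U /\ (forall y, profiles G y -> U y -> F y `<=` W).

From HB Require Import structures.
From mathcomp Require Import all_boot all_order all_algebra.
From mathcomp Require Import all_classical all_reals all_analysis.
Import Order.TTheory GRing.Theory Num.Theory.

Unset Printing Implicit Defensive.
Local Open Scope classical_set_scope.

(* Under property T, "b improves on a against every x_{-i}
   in H_{-i}" is a transitive relation on G_i; it is irreflexive by (iii) and
   its upper sets are closed because P_i has closed values.  On the compact
   set G_i, Zorn's lemma (chains are bounded by the finite intersection
   property) yields a point above x_i that nothing improves upon.  A point
   that is undominated in this sense is never removed by a fast elimination
   step, so it lies in H_i: this is (a).  For (b), deleting one dominated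
   point from a maximal reduction would be a further elimination step, so
   every point of a maximal reduction is undominated against it; by the same
   survival argument any two maximal reductions contain each other.  Only
   property T, (iii) and closedness of the values of P_i are used. *)

(* [compact_In0] needs a pointed space only to handle an empty family. *)
Lemma compact_closed_fam_In0 (T : topologicalType) (A : set T)
    (J : choiceType) (D : set J) (f : J -> set T) :
  compact A -> D !=set0 -> closed_fam_of A D f -> finI D f ->
  \bigcap_(j in D) f j !=set0.
Proof.
move=> cA [j Dj] [g g_closed fE] fI.
have fj_in_filter k : D k -> filter_from (finI_from D f) id (f k).
  by move=> Dk; exists (f k) => //; apply: finI_from1.
have fI_filter := finI_filter fI.
have [|p [Ap p_cluster]] := cA _ fI_filter.
  by apply: filterS (fj_in_filter j Dj) => x; rewrite fE // => -[].
exists p => k Dk; rewrite fE //; split=> //; apply: g_closed => // B.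
by apply: p_cluster; apply: filterS (fj_in_filter k Dk) => x; rewrite fE // => -[].
Qed.

Section CompactMaximal.
Variables (T : topologicalType) (A : set T) (succ : T -> set T).
Hypotheses (A_compact : compact A) (T_accessible : accessible_space T)
  (succ_closed : forall {a}, A a -> closed (succ a))
  (succ_trans : forall {a b c}, A a -> A b -> succ a b -> succ b c -> succ a c)
  (succ_irrefl : forall {a}, A a -> ~ succ a a).

Let weak_succ (a b : T) := b = a \/ succ a b.

Let weak_succ_trans a b c : A a -> A b -> weak_succ a b -> weak_succ b c ->
  weak_succ a c.
Proof.
move=> Aa Ab [->|ab] [->|bc]; [by left|by right|by right|].
by right; apply: succ_trans Aa Ab ab bc.
Qed.

Variables (a b : T).
Hypotheses (Aa : A a) (Ab : A b) (ab : succ a b).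

Let U := {z : T | A z /\ succ a z}.
Let U_A (u : U) : A (sval u). Proof. exact: (proj2_sig u).1. Qed.
Let le (u v : U) : bool := `[< weak_succ (sval u) (sval v) >].

Let le_anti : forall u v, le u v -> le v u -> u = v.
Proof.
move=> [u Uu] [v Uv] /asboolP/= uv /asboolP/= vu; have [[Au _] [Av _]] := (Uu, Uv).
have eq_uv : u = v.
  case: uv => [->//|uv]; case: vu => [->//|vu].
  by case: (succ_irrefl Au); apply: succ_trans Au Av uv vu.
by subst v; congr exist; apply: Prop_irrelevance.
Qed.

Let chain_top (C : set U) (c0 : U) : C c0 -> total_on C le ->
  forall s : seq T, (forall c, c \in s -> (sval @` C) c) ->
  exists2 m, C m & forall c, c \in s -> weak_succ c (sval m).
Proof.
move=> Cc0 C_total; elim=> [|c s IH] s_C; first by exists c0.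
have [m Cm m_top] : exists2 m, C m & forall c, c \in s -> weak_succ c (sval m).
  by apply: IH => c' cs; apply: s_C; rewrite inE cs orbT.
have [u Cu <-] := s_C c (mem_head _ _).
have [/asboolP mu|/asboolP um] := C_total m u Cm Cu.
- exists u => // c'; rewrite inE => /orP[/eqP ->|c's]; first by left.
  have /s_C[v _ vc'] : c' \in c :: s by rewrite inE c's orbT.
  by apply: weak_succ_trans (U_A m) (m_top _ c's) mu; rewrite -vc'; apply: U_A.
- by exists m => // c'; rewrite inE => /orP[/eqP ->|]; [|exact: m_top].
Qed.

Let chain_bounded (C : set U) : total_on C le -> exists t, forall s, C s -> le s t.
Proof.
move=> C_total; have [[c0 Cc0]|] := pselect (C !=set0); last first.
  have Ub : A b /\ succ a b by [].
  by move=> C0; exists (exist _ b Ub) => s Cs; exfalso; apply: C0; exists s.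
pose f c := A `&` (succ c `|` [set c]).
have [p p_top] : \bigcap_(c in sval @` C) f c !=set0.
  apply: (@compact_closed_fam_In0 _ A) => //; first by exists (sval c0); exists c0.
    exists (fun c => succ c `|` [set c]) => // _ [u _ <-].
    by apply: closedU; [exact: succ_closed (U_A u)|exact: accessible_closed_set1].
  move=> D' D'_C; have [m Cm m_top] := @chain_top C c0 Cc0 C_total
    (finmap.enum_fset D') (fun c cD' => set_mem (D'_C c cD')).
  exists (sval m) => c /= cD'; split; first exact: U_A.
  by case: (m_top c cD') => [->|]; [right|left].
have p_weak u : C u -> weak_succ (sval u) p.
  by move=> Cu; have [_ [|->]] := p_top _ (ex_intro2 _ _ u Cu erefl); [right|left].
have [Ap _] := p_top _ (ex_intro2 _ _ c0 Cc0 erefl).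
have Up : A p /\ succ a p.
  split => //; case: (p_weak c0 Cc0) => [->|]; first exact: (proj2_sig c0).2.
  exact: succ_trans (U_A c0) (proj2_sig c0).2.
by exists (exist _ p Up) => u Cu; apply/asboolP; apply: p_weak.
Qed.

Lemma compact_exists_succ_maximal :
  exists m, (A m /\ succ a m) /\ forall z, A z -> ~ succ m z.
Proof.
have le_refl u : le u u by apply/asboolP; left.
have le_trans u v w : le u v -> le v w -> le u w.
  move=> /asboolP uv /asboolP vw; apply/asboolP.
  exact: weak_succ_trans (U_A u) (U_A v) uv vw.
have [t t_max] := Zorn le_refl le_trans le_anti chain_bounded.
exists (sval t); split; first exact: proj2_sig t.
move=> z Az tz; have Uz : A z /\ succ a z.
  by split=> //; apply: succ_trans (U_A t) (proj2_sig t).2 tz.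
have /(congr1 sval)/= zt := t_max (exist _ z Uz) (asboolT (or_intror tz)).
by apply: (succ_irrefl (U_A t)); rewrite -{2}zt.
Qed.

End CompactMaximal.

Section Update.
Context {I : Type} {T : I -> Type}.

Lemma upd_same (x : forall j, T j) i (y : T i) : upd x i y i = y.
Proof.
rewrite /upd; case: pselect => [e|]; last by [].
by rewrite (Prop_irrelevance e erefl).
Qed.

Lemma upd_other (x : forall j, T j) i (y : T i) j : j <> i -> upd x i y j = x j.
Proof. by move=> ji; rewrite /upd; case: pselect => // e; case: ji. Qed.

Lemma upd_upd (x : forall j, T j) i (y z : T i) : upd (upd x i y) i z = upd x i z.
Proof.
by apply: functional_extensionality_dep => j; rewrite /upd; case: pselect.
Qed.

Lemma updP (Q : forall j, T j -> Prop) (x : forall j, T j) i (y : T i) :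
  Q i y -> (forall j, j <> i -> Q j (x j)) -> forall j, Q j (upd x i y j).
Proof.
move=> Qy Qx j; have [<-|ij] := pselect (i = j); first by rewrite upd_same.
have ji : j <> i by move/esym.
by rewrite upd_other //; apply: Qx.
Qed.

Lemma in_minus_sub {H K : forall j, set (T j)} {i x} :
  (forall j, H j `<=` K j) -> in_minus H i x -> in_minus K i x.
Proof. by move=> HK Hx j ji; apply/HK/Hx. Qed.

End Update.

Lemma in_range0 len : in_range len 0.
Proof. by case: len. Qed.

Lemma in_range_pred {len t} : in_range len t.+1 -> in_range len t.
Proof. by case: len => //= n /ltnW. Qed.

(* [succH P H i y a] is [improvements P H i a y] together with H_{-i} being
   nonempty, and [cap_nonempty G P H i a] says that [improvements P H i a]
   meets G_i. *)
Definition improvements {I : Type} {T : I -> Type}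
    (P : forall i, (forall j, T j) -> set (T i)) (H : forall j, set (T j)) i
    (a : T i) : set (T i) :=
  \bigcap_(x in in_minus H i) P i (upd x i a).

Section Reductions.
Context {I : Type} {T : I -> Type} {G : forall i, set (T i)}
  {P : forall i, (forall j, T j) -> set (T i)}.

Lemma cap_nonempty_antitone {K L : forall j, set (T j)} {i xi} :
  (forall j, L j `<=` K j) -> cap_nonempty G P K i xi -> cap_nonempty G P L i xi.
Proof.
by move=> LK [y Gy Ky]; exists y => // x Lx; apply: Ky (in_minus_sub LK Lx).
Qed.

Lemma reduces_star_sub {H} : reduces_star G P H -> forall j, H j `<=` G j.
Proof.
case=> R [len [R0 [_ HE]]] j y; rewrite HE => /(_ 0%N (in_range0 len)).
by rewrite R0.
Qed.

(* Whatever is undominated against K and H together survives every fast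
   elimination step, hence lies in the limit H. *)
Lemma sub_reduces_star {H K} : reduces_star G P H -> (forall j, K j `<=` G j) ->
  (forall j z, K j z -> ~ cap_nonempty G P (fun k => K k `|` H k) j z) ->
  forall j, K j `<=` H j.
Proof.
case=> R [len [R0 [R_fast HE]]] KG K_undominated.
have H_R t : in_range len t -> forall j, H j `<=` R t j.
  by move=> rt j y; rewrite HE => /(_ t rt).
have K_R t : in_range len t -> forall j, K j `<=` R t j.
  elim: t => [_ j|t IH rt j y Ky]; first by rewrite R0; apply: KG.
  have rt' := in_range_pred rt.
  have [_ [[_ R_dominated] _]] := R_fast t rt.
  apply: contrapT => notRy; apply: (K_undominated j y Ky).
  apply: cap_nonempty_antitone (R_dominated j y (IH rt' j y Ky) notRy).
  by move=> k w [Kw|Hw]; [apply: IH rt' k w Kw|apply: H_R rt' k w Hw].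
by move=> j y Ky; rewrite HE => t rt; apply: K_R.
Qed.

Lemma maximal_reduction_undominated {K} : maximal_reduction G P K ->
  forall i xi, K i xi -> ~ cap_nonempty G P K i xi.
Proof.
case=> K_red K_max i xi Kxi xi_dominated.
(* Deleting the dominated point xi from K_i is an elimination step. *)
pose K' := @upd I (fun j => set (T j)) K i (K i `\ xi).
have K'K : forall j, K' j `<=` K j.
  exact: (updP (fun j (S : set (T j)) => S `<=` K j) K i (K i `\ xi)
    (@subDsetl _ _ _) (fun j _ => @subset_refl _ _)).
have K'_pairing : pairing G K'.
  by move=> j y /K'K; apply: (reduces_star_sub K_red j).
have K_K' : arrow G P K K'.
  split=> // j y Ky notK'y; have [ij|ji] := pselect (i = j); last first.
    by case: notK'y; rewrite /K' upd_other //; move/esym.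
  subst j; have -> : y = xi; last exact: xi_dominated.
  by apply: contrapT => yxi; apply: notK'y; rewrite /K' upd_same.
have := K_max K' K'_pairing K'K K_K' i; rewrite /K' upd_same => K'iE.
by move: Kxi; rewrite -K'iE => -[_]; apply.
Qed.

Lemma maximal_reduction_unique {M M'} :
  maximal_reduction G P M -> maximal_reduction G P M' -> forall i, M' i = M i.
Proof.
have maximal_sub N N' : maximal_reduction G P N -> maximal_reduction G P N' ->
    forall j, N' j `<=` N j.
  move=> N_max N'_max; apply: sub_reduces_star N_max.1 _ _.
    exact: reduces_star_sub N'_max.1.
  move=> j z N'z /(cap_nonempty_antitone (fun k => @subsetUl _ (N' k) (N k))).
  exact: maximal_reduction_undominated N'_max j z N'z.
by move=> M_max M'_max i; apply/seteqP; split; apply: maximal_sub.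
Qed.

Lemma profiles_upd {H i x y} : (forall j, H j `<=` G j) ->
  in_minus H i x -> G i y -> profiles G (upd x i y).
Proof. by move=> HG Hx Gy; apply: updP => // j ji; apply/HG/Hx. Qed.

Context {Q : forall i, (forall j, T j) -> set (T i)}.
Hypotheses (PQ_T : propertyT G P Q)
  (P_irrefl : forall i x, profiles G x -> ~ P i x (x i)).

Lemma improvements_trans {H i a b c} : (forall j, H j `<=` G j) ->
  G i a -> G i b -> improvements P H i a b -> improvements P H i b c ->
  improvements P H i a c.
Proof.
move=> HG Ga Gb ab bc x Hx.
have [_ PQ_a] := PQ_T i _ (profiles_upd HG Hx Ga).
have [PQ_b _] := PQ_T i _ (profiles_upd HG Hx Gb).
by apply: (PQ_a b (ab x Hx)); rewrite upd_upd; apply/PQ_b/bc.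
Qed.

Lemma improvements_irrefl {H i a x} : (forall j, H j `<=` G j) ->
  in_minus H i x -> G i a -> ~ improvements P H i a a.
Proof.
move=> HG Hx Ga /(_ x Hx); have := P_irrefl i _ (profiles_upd HG Hx Ga).
by rewrite upd_same.
Qed.

End Reductions.

Section MaximalImprovement.
Context {I : Type} {E : I -> topologicalType} {G : forall i, set (E i)}
  {P Q : forall i, (forall j, E j) -> set (E i)}.
Hypotheses (PQ_T : propertyT G P Q)
  (P_irrefl : forall i x, profiles G x -> ~ P i x (x i))
  (P_closed : forall i x, profiles G x -> closed (P i x)).

Lemma improvements_closed {H i a} : (forall j, H j `<=` G j) -> G i a ->
  closed (improvements P H i a).
Proof.
by move=> HG Ga; apply: closed_bigI => x Hx; apply/P_closed/profiles_upd.
Qed.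

Lemma reduces_star_exists_maximal_improvement {H i x0 xi yi} :
  reduces_star G P H -> compact (G i) -> accessible_space (E i) ->
  in_minus H i x0 -> G i xi -> G i yi -> improvements P H i xi yi ->
  exists xs, [/\ H i xs, improvements P H i xi xs &
    forall z, G i z -> ~ improvements P H i xs z].
Proof.
move=> H_red G_compact E_accessible Hx0 Gxi Gyi xi_yi.
have HG := reduces_star_sub H_red.
have [m [[Gm xi_m] m_max]] :=
  compact_exists_succ_maximal _ _ _ G_compact E_accessible
  (fun a Ga => improvements_closed HG Ga)
  (fun a b c => improvements_trans PQ_T HG)
  (fun a => improvements_irrefl P_irrefl HG Hx0) _ _ Gxi Gyi xi_yi.
exists m; split=> //.
pose K := @upd I (fun j => set (E j)) (fun j => set0) i [set m].
have KG : forall j, K j `<=` G j.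
  have mG : [set m] `<=` G i by move=> _ ->.
  exact: (updP (fun j (S : set (E j)) => S `<=` G j) _ i _ mG
    (fun j _ => @sub0set _ _)).
have K_undominated j z : K j z ->
    ~ cap_nonempty G P (fun k => K k `|` H k) j z.
  move: z; apply: (updP (fun j (S : set (E j)) => forall z, S z ->
    ~ cap_nonempty G P (fun k => K k `|` H k) j z)) => [_ ->|//].
  move=> /(cap_nonempty_antitone (fun k => @subsetUr _ (K k) (H k))) [y Gy m_y].
  exact: m_max y Gy m_y.
have := sub_reduces_star H_red KG K_undominated i m.
by rewrite /K upd_same; apply.
Qed.

End MaximalImprovement.

Theorem corollary1 (R : realType) (I : Type) (E : I -> tvsType R)
  (G : forall i, set (E i))
  (P Q : forall i, (forall j, E j) -> set (E i)) :
  inhabited I ->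
  (forall i, hausdorff_space (E i)) ->
  (forall i, compact (G i)) ->
  (forall i, convex_set (G i : set (convex_lmodType (E i)))) ->
  (* P_i, Q_i : X -> 2^{G_i} *)
  (forall i x, profiles G x -> P i x `<=` G i /\ Q i x `<=` G i) ->
  propertyT G P Q ->
  (* (i) *)
  (forall i x yi, profiles G x -> G i yi -> Q i (upd x i yi) yi) ->
  (* (ii) *)
  (forall i x, profiles G x ->
     convex_set (Q i x : set (convex_lmodType (E i))) /\ closed (Q i x)) ->
  (* (iii) *)
  (forall i x, profiles G x -> ~ P i x (x i)) ->
  (* (iv) *)
  (forall i, usc G i (P i)) ->
  (forall i x, profiles G x ->
     closed (P i x) /\ convex_set (P i x : set (convex_lmodType (E i)))) ->
  (* (a) *)
  (forall H, reduces_star G P H ->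
     forall i xi yi, G i xi -> G i yi -> succH P H i yi xi ->
     exists xs, H i xs /\ succH P H i xs xi /\
       (forall zi, G i zi -> ~ succH P H i zi xs)) /\
  (* (b) *)
  (forall M, nonempty_pairing M -> maximal_reduction G P M ->
     forall M', maximal_reduction G P M' -> forall i, M' i = M i).
Proof.
move=> _ E_hausdorff G_compact _ _ PQ_T _ _ P_irrefl _ P_closed_convex.
have P_closed i x : profiles G x -> closed (P i x).
  by move=> Gx; have [] := P_closed_convex i x Gx.
split=> [H H_red i xi yi Gxi Gyi [[x0 Hx0] xi_yi]|M _ M_max M' M'_max].
  have [xs [Hxs xi_xs xs_max]] := reduces_star_exists_maximal_improvement
    PQ_T P_irrefl P_closed H_red (G_compact i)
    (hausdorff_accessible (E_hausdorff i)) Hx0 Gxi Gyi xi_yi.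
  exists xs; split=> //; split; first by split; first by exists x0.
  by move=> z Gz [_ xs_z]; apply: xs_max Gz xs_z.
exact: maximal_reduction_unique M_max M'_max.
Qed.
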